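(* Let $A$ and $B$ be types. There is a map $W_{A,B}:A*B\to\Sigma A\vee\Sigma B$ such that \[\Sigma A\times\Sigma B\simeq \mathbf{1}\sqcup^{A*B}(\Sigma A\vee\Sigma B),\] where the pushout is along the unique map $A*B\to\mathbf{1}$ and $W_{A,B}$, and such that the induced map $\Sigma A\vee\Sigma B\to\Sigma A\times\Sigma B$ is the canonical one.
   Context: Homotopy type theory. $\Sigma A$ is the suspension of $A$ (higher inductive type with $\mathsf{north},\mathsf{south}:\Sigma A$ and $\operatorname{merid}:A\to\mathsf{north}=\mathsf{south}$), pointed by $\mathsf{north}$. For pointed types $X,Y$, the wedge $X\vee Y$ is the homotopy pushout of the basepoint maps $\mathbf{1}\to X$, $\mathbf{1}\to Y$; the canonical map $X\vee Y\to X\times Y$ sends $\operatorname{inl}(x)\mapsto(x,\star_Y)$, $\operatorname{inr}(y)\mapsto(\star_X,y)$. The join $A*B$ is the homotopy pushout of the projections $A\xleftarrow{\operatorname{fst}}A\times B\xrightarrow{\operatorname{snd}}B$. *)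

(* Identity types of HoTT are modelled by the Type-valued inductive [paths]
   (NOT Rocq's Prop-valued [eq], which is proof-irrelevant here).
   Higher inductive types are not primitive in Rocq, so homotopy pushouts are
   given as *structures*: a carrier with constructors and a dependent
   eliminator with (propositional) computation rules. *)

Inductive paths {A : Type} (a : A) : A -> Type :=
  idpath : paths a a.
Arguments idpath {A a}.

Definition inverse {A : Type} {x y : A} (p : paths x y) : paths y x :=
  match p in paths _ y' return paths y' x with idpath => idpath end.

Definition concat {A : Type} {x y z : A} (p : paths x y) (q : paths y z)
  : paths x z :=
  match q in paths _ z' return paths x z' with idpath => p end.

Definition transport {A : Type} (Q : A -> Type) {x y : A} (p : paths x y)
  (u : Q x) : Q y :=
  match p in paths _ y' return Q y' with idpath => u end.

Definition ap {A B : Type} (f : A -> B) {x y : A} (p : paths x y)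
  : paths (f x) (f y) :=
  match p in paths _ y' return paths (f x) (f y') with idpath => idpath end.

Definition apD {A : Type} {Q : A -> Type} (f : forall a, Q a) {x y : A}
  (p : paths x y) : paths (transport Q p (f x)) (f y) :=
  match p in paths _ y' return paths (transport Q p (f x)) (f y') with
  | idpath => idpath end.

Definition transport_const {A T : Type} {x y : A} (p : paths x y) (t : T)
  : paths (transport (fun _ => T) p t) t :=
  match p in paths _ y' return paths (transport (fun _ => T) p t) t with
  | idpath => idpath end.

Definition IsEquiv {X Y : Type} (e : X -> Y) : Type :=
  ({ g : Y -> X & forall x, paths (g (e x)) x }
   * { h : Y -> X & forall y, paths (e (h y)) y })%type.

Record Pushout {C X Y : Type} (f : C -> X) (g : C -> Y) := {
  po_carrier :> Type;
  po_inl : X -> po_carrier;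
  po_inr : Y -> po_carrier;
  po_glue : forall c, paths (po_inl (f c)) (po_inr (g c));
  po_ind : forall (Q : po_carrier -> Type)
             (l : forall x, Q (po_inl x)) (r : forall y, Q (po_inr y))
             (gl : forall c, paths (transport Q (po_glue c) (l (f c))) (r (g c))),
             forall p, Q p;
  po_ind_inl : forall Q l r gl x, paths (po_ind Q l r gl (po_inl x)) (l x);
  po_ind_inr : forall Q l r gl y, paths (po_ind Q l r gl (po_inr y)) (r y);
  po_ind_glue : forall Q l r gl c,
      paths (apD (po_ind Q l r gl) (po_glue c))
            (concat (ap (transport Q (po_glue c)) (po_ind_inl Q l r gl (f c)))
                    (concat (gl c) (inverse (po_ind_inr Q l r gl (g c)))))
}.
Arguments po_carrier {C X Y f g} _.
Arguments po_inl {C X Y f g} _ _.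
Arguments po_inr {C X Y f g} _ _.
Arguments po_glue {C X Y f g} _ _.
Arguments po_ind {C X Y f g} _ _ _ _ _ _.
Arguments po_ind_inl {C X Y f g} _ _ _ _ _ _.
Arguments po_ind_inr {C X Y f g} _ _ _ _ _ _.
Arguments po_ind_glue {C X Y f g} _ _ _ _ _ _.

Definition Susp (A : Type) := @Pushout A unit unit (fun _ => tt) (fun _ => tt).
Definition north {A : Type} (S : Susp A) : S := po_inl S tt.
Definition south {A : Type} (S : Susp A) : S := po_inr S tt.
Definition merid {A : Type} (S : Susp A) (a : A) : paths (north S) (south S) :=
  po_glue S a.

Definition Wedge (X : Type) (x0 : X) (Y : Type) (y0 : Y) :=
  @Pushout unit X Y (fun _ => x0) (fun _ => y0).

Definition wedge_to_prod {X : Type} {x0 : X} {Y : Type} {y0 : Y}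
  (V : Wedge X x0 Y y0) : V -> (X * Y)%type :=
  po_ind V (fun _ => (X * Y)%type) (fun x => (x, y0)) (fun y => (x0, y))
    (fun c => transport_const (po_glue V c) (x0, y0)).

Definition Join (A B : Type) := @Pushout (A * B) A B fst snd.

Definition happly {A : Type} {Q : A -> Type} {f g : forall a, Q a}
  (p : paths f g) : forall a, paths (f a) (g a) :=
  fun a => match p in paths _ g' return paths (f a) (g' a) with
           | idpath => idpath end.

Definition Funext : Type :=
  forall (A : Type) (Q : A -> Type) (f g : forall a, Q a),
    IsEquiv (@happly A Q f g).


(* The Whitehead map W : A * B -> ΣA ∨ ΣB sends [inl a] to [inr south], [inr b] to [inl south],
   and the glue at (a, b) to the path [merid b]⁻¹ · (wedge glue)⁻¹ · [merid a] through the base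
   point.  Composed with ΣA ∨ ΣB -> ΣA × ΣB it is null-homotopic onto (south, south), because
   [merid a] and [merid b] span a square in the product; this null-homotopy extends the canonical
   map to a map [to_prod] out of the cofibre P of W.  The inverse [of_prod] is defined by suspension
   induction in each variable: (x, north) goes to the wedge point [inl x], (x, south) to a point
   that is [inr south] over north and the apex over south, and (x, merid b) is read off the cone
   over W at the glue points (a, b).  Both composites are homotopic to the identity by further
   induction; all higher coherences live over a single glue point (a, b) of the join, where they
   hold by path induction. *)

(** * Path algebra *)

Notation "p @ q" := (concat p q) (at level 20, left associativity).
Notation "p ⁻¹" := (inverse p) (at level 3, format "p '⁻¹'").
Notation "1" := idpath.

Definition concat_1p {A} {x y : A} (p : paths x y) : paths (1 @ p) p :=
  match p with idpath => idpath end.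
Definition concat_p1 {A} {x y : A} (p : paths x y) : paths (p @ 1) p := 1.
Definition concat_p_pp {A} {x y z w : A} (p : paths x y) (q : paths y z) (r : paths z w)
  : paths (p @ (q @ r)) (p @ q @ r).
Proof. destruct r; reflexivity. Defined.
Definition concat_pV {A} {x y : A} (p : paths x y) : paths (p @ p⁻¹) 1.
Proof. destruct p; reflexivity. Defined.
Definition concat_Vp {A} {x y : A} (p : paths x y) : paths (p⁻¹ @ p) 1.
Proof. destruct p; reflexivity. Defined.
Definition concat_pp_V {A} {x y z : A} (p : paths x y) (q : paths y z)
  : paths (p @ q @ q⁻¹) p.
Proof. destruct q; reflexivity. Defined.
Definition concat_pV_p {A} {x y z : A} (p : paths x z) (q : paths y z)
  : paths (p @ q⁻¹ @ q) p.
Proof. destruct q; reflexivity. Defined.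
Definition inv_1 {A} {x : A} : paths (@idpath A x)⁻¹ 1 := 1.
Definition inv_V {A} {x y : A} (p : paths x y) : paths (p⁻¹)⁻¹ p.
Proof. destruct p; reflexivity. Defined.
Definition inv_pp {A} {x y z : A} (p : paths x y) (q : paths y z)
  : paths (p @ q)⁻¹ (q⁻¹ @ p⁻¹).
Proof. destruct q, p; reflexivity. Defined.

Definition ap_pp {A B} (f : A -> B) {x y z : A} (p : paths x y) (q : paths y z)
  : paths (ap f (p @ q)) (ap f p @ ap f q).
Proof. destruct q; reflexivity. Defined.
Definition ap_V {A B} (f : A -> B) {x y : A} (p : paths x y) : paths (ap f p⁻¹) (ap f p)⁻¹.
Proof. destruct p; reflexivity. Defined.
Definition ap_compose {A B C} (f : A -> B) (g : B -> C) {x y : A} (p : paths x y)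
  : paths (ap (fun a => g (f a)) p) (ap g (ap f p)).
Proof. destruct p; reflexivity. Defined.
Definition ap_idmap {A} {x y : A} (p : paths x y) : paths (ap (fun a => a) p) p.
Proof. destruct p; reflexivity. Defined.
Definition ap_const {A B} (c : B) {x y : A} (p : paths x y) : paths (ap (fun _ => c) p) 1.
Proof. destruct p; reflexivity. Defined.

Definition whiskerL {A} {x y z : A} (p : paths x y) {q r : paths y z} (t : paths q r)
  : paths (p @ q) (p @ r) := ap (concat p) t.
Definition whiskerR {A} {x y z : A} {p q : paths x y} (t : paths p q) (r : paths y z)
  : paths (p @ r) (q @ r) := ap (fun u => u @ r) t.

Ltac path_normalize :=
  repeat first [ rewrite concat_p1 | rewrite concat_1p | rewrite inv_1
               | rewrite inv_pp | rewrite inv_V | rewrite concat_p_pp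
               | rewrite concat_pV | rewrite concat_Vp
               | rewrite concat_pp_V | rewrite concat_pV_p ].

Definition concat_Ap {X Y} {F G : X -> Y} (h : forall x, paths (F x) (G x)) {x y : X}
  (p : paths x y) : paths (ap F p @ h y) (h x @ ap G p) :=
  match p in paths _ y' return paths (ap F p @ h y') (h x @ ap G p) with
  | idpath => concat_1p (h x) end.

Definition ap_homotopic {X Y} {F G : X -> Y} (h : forall x, paths (F x) (G x)) {x y : X}
  (p : paths x y) : paths (ap F p) (h x @ ap G p @ (h y)⁻¹).
Proof. destruct p. exact (concat_pV (h x))⁻¹. Defined.

Definition ap_pair_square {X Y} {x1 x2 : X} {y1 y2 : Y} (p : paths x1 x2) (q : paths y1 y2)
  : paths (ap (fun x => (x, y1)) p)
          (ap (pair x1) q @ ap (fun x => (x, y2)) p @ (ap (pair x2) q)⁻¹).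
Proof. destruct p, q; reflexivity. Defined.

Definition transport_of_square {X T} {F G : X -> T} {u v : X} (q : paths u v)
  {a : paths (F u) (G u)} {b : paths (F v) (G v)} (e : paths (ap F q @ b) (a @ ap G q))
  : paths (transport (fun x => paths (F x) (G x)) q a) b.
Proof. destruct q. exact (e⁻¹ @ concat_1p b). Defined.

Definition square_of_transport {X T} {F G : X -> T} {u v : X} (q : paths u v)
  {a : paths (F u) (G u)} {b : paths (F v) (G v)}
  (t : paths (transport (fun x => paths (F x) (G x)) q a) b)
  : paths (ap F q @ b) (a @ ap G q).
Proof. destruct q. exact (concat_1p b @ t⁻¹). Defined.

Lemma square_of_transport_of_square {X T} {F G : X -> T} {u v : X} (q : paths u v)
  {a : paths (F u) (G u)} {b : paths (F v) (G v)} (e : paths (ap F q @ b) (a @ ap G q))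
  : paths (square_of_transport q (transport_of_square q e)) e.
Proof.
  destruct q. simpl in *. destruct e. simpl.
  generalize (concat_1p b). generalize (1 @ b). intros w c. destruct c. reflexivity.
Defined.

Lemma concat_Ap_apD {X T} {F G : X -> T} (H : forall x, paths (F x) (G x))
  {u v : X} (q : paths u v)
  : paths (concat_Ap H q) (square_of_transport q (apD H q)).
Proof. destruct q. reflexivity. Defined.

Lemma square_of_transport_whisker {X T} {F G : X -> T} {u v : X} (q : paths u v)
  {a a' : paths (F u) (G u)} {b b' : paths (F v) (G v)}
  (t : paths (transport (fun x => paths (F x) (G x)) q a) b)
  (al : paths a' a) (be : paths b' b)
  : paths (square_of_transport q (ap (transport (fun x => paths (F x) (G x)) q) al @ (t @ be⁻¹)))
          (whiskerL (ap F q) be @ square_of_transport q t @ whiskerR al⁻¹ (ap G q)).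
Proof.
  destruct al, be, q. simpl. destruct t. simpl.
  rewrite concat_1p. reflexivity.
Defined.

Lemma transport_homotopy2 {X T} {F G : X -> T} (al be : forall x, paths (F x) (G x))
  {u v : X} (q : paths u v) (tu : paths (al u) (be u)) (tv : paths (al v) (be v))
  (e : paths (concat_Ap al q @ whiskerR tu (ap G q)) (whiskerL (ap F q) tv @ concat_Ap be q))
  : paths (transport (fun x => paths (al x) (be x)) q tu) tv.
Proof.
  destruct q. simpl in *. revert e. generalize (al u) (be u) tu tv. clear.
  intros a b tu tv e. destruct tv. simpl in *.
  unfold whiskerR in e. simpl in e. rewrite ap_idmap in e.
  destruct a. simpl in *. exact ((concat_1p tu)⁻¹ @ e).
Qed.

Lemma ap_of_apD_const {P T} {u v : P} (F : P -> T) (q : paths u v) {a b : T}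
  (cl : paths (F u) a) (cr : paths (F v) b) (d : paths a b)
  (H : paths (apD F q) (ap (transport (fun _ => T) q) cl @ ((transport_const q a @ d) @ cr⁻¹)))
  : paths (ap F q) (cl @ d @ cr⁻¹).
Proof. destruct q, d, cr. simpl in *. exact (H @ ap_idmap cl). Defined.

Definition isequiv_of_inverse {X Y : Type} (f : X -> Y) (g : Y -> X)
  (gf : forall x, paths (g (f x)) x) (fg : forall y, paths (f (g y)) y) : IsEquiv f :=
  (existT _ g gf, existT _ g fg).

(** * Maps and homotopies out of a pushout *)

Section PushoutPrinciples.
Context {C X Y : Type} {f : C -> X} {g : C -> Y} (P : Pushout f g).

Definition po_rec (T : Type) (l : X -> T) (r : Y -> T)
  (d : forall c, paths (l (f c)) (r (g c))) : P -> T :=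
  po_ind P (fun _ => T) l r (fun c => transport_const (po_glue P c) (l (f c)) @ d c).
Definition po_rec_inl T l r d x : paths (po_rec T l r d (po_inl P x)) (l x) :=
  po_ind_inl P (fun _ => T) l r _ x.
Definition po_rec_inr T l r d y : paths (po_rec T l r d (po_inr P y)) (r y) :=
  po_ind_inr P (fun _ => T) l r _ y.
Definition po_rec_glue T l r d c
  : paths (ap (po_rec T l r d) (po_glue P c))
          (po_rec_inl T l r d (f c) @ d c @ (po_rec_inr T l r d (g c))⁻¹) :=
  ap_of_apD_const _ _ _ _ _ (po_ind_glue P (fun _ => T) l r _ c).

Section Homotopy.
Context {T : Type} (F G : P -> T)
  (hl : forall x, paths (F (po_inl P x)) (G (po_inl P x)))
  (hr : forall y, paths (F (po_inr P y)) (G (po_inr P y)))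
  (hg : forall c, paths (ap F (po_glue P c) @ hr (g c)) (hl (f c) @ ap G (po_glue P c))).

Definition po_homotopy : forall p, paths (F p) (G p) :=
  po_ind P (fun p => paths (F p) (G p)) hl hr
    (fun c => transport_of_square (po_glue P c) (hg c)).
Definition po_homotopy_inl x : paths (po_homotopy (po_inl P x)) (hl x) :=
  po_ind_inl P _ hl hr _ x.
Definition po_homotopy_inr y : paths (po_homotopy (po_inr P y)) (hr y) :=
  po_ind_inr P _ hl hr _ y.

Lemma po_homotopy_glue c :
  paths (concat_Ap po_homotopy (po_glue P c))
    (whiskerL (ap F (po_glue P c)) (po_homotopy_inr (g c)) @ hg c
      @ whiskerR (po_homotopy_inl (f c))⁻¹ (ap G (po_glue P c))).
Proof.
  rewrite concat_Ap_apD. unfold po_homotopy_inr, po_homotopy_inl, po_homotopy.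
  rewrite (po_ind_glue P (fun p => paths (F p) (G p)) hl hr _ c).
  rewrite square_of_transport_whisker, square_of_transport_of_square. reflexivity.
Qed.

End Homotopy.

Definition po_homotopy2 {T} (F G : P -> T) (al be : forall p, paths (F p) (G p))
  (tl : forall x, paths (al (po_inl P x)) (be (po_inl P x)))
  (tr : forall y, paths (al (po_inr P y)) (be (po_inr P y)))
  (tg : forall c, paths (concat_Ap al (po_glue P c) @ whiskerR (tl (f c)) (ap G (po_glue P c)))
                       (whiskerL (ap F (po_glue P c)) (tr (g c)) @ concat_Ap be (po_glue P c)))
  : forall p, paths (al p) (be p) :=
  po_ind P (fun p => paths (al p) (be p)) tl tr
    (fun c => transport_homotopy2 al be _ _ _ (tg c)).

End PushoutPrinciples.

(** * Contractible configurations of paths *)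

Ltac destruct_inv H :=
  generalize dependent H; intro H; rewrite <- (inv_V H); generalize (inverse H); clear H;
  intro H; destruct H.

Definition paths_ind_r {A} {y : A} (Q : forall x, paths x y -> Type) (d : Q y 1)
  : forall x p, Q x p.
Proof. intros x p. destruct p. exact d. Defined.

Definition triangle_ind_r {T} {a b c : T} (x : paths a b) (y : paths b c)
  (Q : forall z : paths a c, paths 1 (x @ y @ z⁻¹) -> Type)
  (base : Q (x @ y) (concat_pV (x @ y))⁻¹) : forall z H, Q z H.
Proof.
  intros z H. revert Q base H. destruct z. destruct y. intros Q base H. simpl in H.
  destruct H. exact base.
Defined.

Definition triangle_l_center {T} {a b c : T} (y : paths b c) (w : paths a c)
  : paths 1 (w @ y⁻¹ @ y @ w⁻¹).
Proof. destruct w, y. reflexivity. Defined.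

Definition triangle_ind_l {T} {a b c : T} (y : paths b c) (w : paths a c)
  (Q : forall x : paths a b, paths 1 (x @ y @ w⁻¹) -> Type)
  (base : Q (w @ y⁻¹) (triangle_l_center y w)) : forall x H, Q x H.
Proof.
  intros x H. revert Q base H. destruct w. destruct y. intros Q base H. simpl in H.
  destruct H. exact base.
Defined.

(* [(t, cl, cr, H)] below is what [po_homotopy] provides at a glue point whose glue path has been
   contracted to [1]: its value there, its two computation rules and [po_homotopy_glue]. *)
Definition homotopy_at_glue_center {T} {a b : T} (hl hr : paths a b) (hg : paths (1 @ hr) hl)
  : paths hl hr := hg⁻¹ @ concat_1p hr.

Definition homotopy_at_glue_center_coh {T} {a b : T} (hl hr : paths a b)
  (hg : paths (1 @ hr) hl)
  : paths (concat_1p hl)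
          (whiskerL 1 (homotopy_at_glue_center hl hr hg) @ hg @ whiskerR 1⁻¹ 1).
Proof. destruct hg. destruct hr. reflexivity. Defined.

Definition homotopy_at_glue_ind {T} {a b : T} (hl hr : paths a b) (hg : paths (1 @ hr) hl)
  (Q : forall (t : paths a b) (cl : paths t hl) (cr : paths t hr),
        paths (concat_1p t) (whiskerL 1 cr @ hg @ whiskerR cl⁻¹ 1) -> Type)
  (base : Q hl 1 (homotopy_at_glue_center hl hr hg) (homotopy_at_glue_center_coh hl hr hg))
  : forall t cl cr H, Q t cl cr H.
Proof.
  intros t cl cr H. destruct_inv cl. intro H. revert Q base H. destruct cr. intros Q base H.
  rewrite <- (concat_pp_V H (concat_1p hg)). generalize (H @ concat_1p hg). clear H. intro H.
  destruct H. destruct hl. exact base.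
Defined.

Ltac revert_deps_of2 z H :=
  repeat match goal with
  | [ h : ?T |- _ ] =>
      tryif constr_eq h z then fail else
      tryif constr_eq h H then fail else
      match T with context [z] => generalize dependent h end
  end.
Ltac revert_front2 z H := revert_deps_of2 z H; revert z H.

Ltac revert_deps_of4 t a b c :=
  repeat match goal with
  | [ h : ?T |- _ ] =>
      tryif constr_eq h t then fail else
      tryif constr_eq h a then fail else
      tryif constr_eq h b then fail else
      tryif constr_eq h c then fail else
      match T with context [t] => generalize dependent h end
  end.
Ltac revert_front4 t a b c := revert_deps_of4 t a b c; revert t a b c.

Ltac abstract_term x t := set (t := x) in *; clearbody t.

(** * Over one glue point of the join *)

(* The two halves of the equivalence are assembled from data indexed by the glue points (a, b) of
   the join.  Here that data is developed for arbitrary points, maps and computation rules of the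
   same shape, so that the coherences between them can be proved by path induction. *)

Section GluePoint.
Context {SA SB V J P : Type}.
Context {N S : SA} {N' S' : SB} {p : paths N S} {q : paths N' S'}.
Context {il : SA -> V} {ir : SB -> V} {gv : paths (il N) (ir N')}.
Context {W : J -> V} {ja jb : J} {jg : paths ja jb}.
Context {W_inl : paths (W ja) (ir S')} {W_inr : paths (W jb) (il S)}
  {W_glue : paths (ap W jg) (W_inl @ ((ap ir q)⁻¹ @ gv⁻¹ @ ap il p) @ W_inr⁻¹)}.
Context {wp : V -> SA * SB} {wp_inl : forall x, paths (wp (il x)) (x, N')}
  {wp_inr : forall y, paths (wp (ir y)) (N, y)}
  {wp_glue : paths (ap wp gv) (wp_inl N @ 1 @ (wp_inr N')⁻¹)}.

Definition null_inl : paths (S, S') (wp (W ja)) :=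
  (ap (fun x => (x, S')) p)⁻¹ @ (wp_inr S')⁻¹ @ (ap wp W_inl)⁻¹.
Definition null_inr : paths (S, S') (wp (W jb)) :=
  (ap (pair S) q)⁻¹ @ (wp_inl S)⁻¹ @ (ap wp W_inr)⁻¹.
Definition null_glue
  : paths (ap (fun _ : J => (S, S')) jg @ null_inr) (null_inl @ ap (fun j => wp (W j)) jg).
Proof.
  rewrite ap_const, (ap_compose W wp), W_glue.
  rewrite !ap_pp, !ap_V. rewrite <- !ap_compose.
  rewrite (ap_homotopic wp_inr), (ap_homotopic wp_inl). rewrite wp_glue.
  rewrite (ap_pair_square p q). unfold null_inl, null_inr. path_normalize. reflexivity.
Defined.

Context {null : forall j, paths (S, S') (wp (W j))}
  {null_beta_inl : paths (null ja) null_inl} {null_beta_inr : paths (null jb) null_inr}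
  {null_beta_glue : paths (concat_Ap null jg)
     (whiskerL (ap (fun _ => (S, S')) jg) null_beta_inr @ null_glue
      @ whiskerR null_beta_inl⁻¹ (ap (fun j => wp (W j)) jg))}.

Context {apex : P} {incl : V -> P} {spoke : forall j, paths apex (incl (W j))}.
Context {to_prod : P -> SA * SB} {to_prod_apex : paths (to_prod apex) (S, S')}
  {to_prod_incl : forall w, paths (to_prod (incl w)) (wp w)}
  {to_prod_spoke : forall j,
     paths (ap to_prod (spoke j)) (to_prod_apex @ null j @ (to_prod_incl (W j))⁻¹)}.
Context {slice_south : SA -> P}
  {slice_south_inl : paths (slice_south N) (incl (ir S'))}
  {slice_south_inr : paths (slice_south S) apex}
  {slice_south_glue : paths (ap slice_south p)
     (slice_south_inl @ ((ap incl W_inl)⁻¹ @ (spoke ja)⁻¹) @ slice_south_inr⁻¹)}.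

Definition slice_north (x : SA) : P := incl (il x).

Definition spoke_glue : paths (spoke jb) (spoke ja @ ap incl (ap W jg)).
Proof.
  rewrite <- ap_compose.
  rewrite <- (@concat_Ap _ _ (fun _ => apex) (fun j => incl (W j)) spoke _ _ jg).
  rewrite ap_const. rewrite concat_1p. reflexivity.
Defined.

Definition slice_merid_inl : paths (slice_north N) (slice_south N) :=
  ap incl gv @ ap incl (ap ir q) @ slice_south_inl⁻¹.
Definition slice_merid_inr : paths (slice_north S) (slice_south S) :=
  (ap incl W_inr)⁻¹ @ (spoke jb)⁻¹ @ slice_south_inr⁻¹.
Definition slice_merid_glue
  : paths (ap slice_north p @ slice_merid_inr) (slice_merid_inl @ ap slice_south p).
Proof.
  unfold slice_merid_inr, slice_merid_inl.
  rewrite slice_south_glue, spoke_glue, W_glue.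
  unfold slice_north. rewrite (ap_compose il incl).
  rewrite !ap_pp, !ap_V. path_normalize. reflexivity.
Defined.

Definition to_prod_south_inl : paths (to_prod (slice_south N)) (N, S') :=
  ap to_prod slice_south_inl @ to_prod_incl (ir S') @ wp_inr S'.
Definition to_prod_south_inr : paths (to_prod (slice_south S)) (S, S') :=
  ap to_prod slice_south_inr @ to_prod_apex.
Definition to_prod_south_glue
  : paths (ap (fun x => to_prod (slice_south x)) p @ to_prod_south_inr)
          (to_prod_south_inl @ ap (fun x => (x, S')) p).
Proof.
  rewrite (ap_compose slice_south to_prod), slice_south_glue.
  rewrite !ap_pp, !ap_V, to_prod_spoke, null_beta_inl.
  rewrite <- (ap_compose incl to_prod), (ap_homotopic to_prod_incl).
  unfold to_prod_south_inl, to_prod_south_inr, null_inl. path_normalize. reflexivity.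
Defined.

Context {slice_merid : forall x, paths (slice_north x) (slice_south x)}
  {slice_merid_beta_inl : paths (slice_merid N) slice_merid_inl}
  {slice_merid_beta_inr : paths (slice_merid S) slice_merid_inr}
  {slice_merid_beta_glue : paths (concat_Ap slice_merid p)
     (whiskerL (ap slice_north p) slice_merid_beta_inr @ slice_merid_glue
      @ whiskerR slice_merid_beta_inl⁻¹ (ap slice_south p))}.
Context {to_prod_south : forall x, paths (to_prod (slice_south x)) (x, S')}
  {to_prod_south_beta_inl : paths (to_prod_south N) to_prod_south_inl}
  {to_prod_south_beta_inr : paths (to_prod_south S) to_prod_south_inr}
  {to_prod_south_beta_glue : paths (concat_Ap to_prod_south p)
     (whiskerL (ap (fun x => to_prod (slice_south x)) p) to_prod_south_beta_inr
      @ to_prod_south_glue @ whiskerR to_prod_south_beta_inl⁻¹ (ap (fun x => (x, S')) p))}.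

Definition to_prod_merid_lhs (x : SA) : paths (to_prod (slice_north x)) (x, S') :=
  ap to_prod (slice_merid x) @ to_prod_south x.
Definition to_prod_merid_rhs (x : SA) : paths (to_prod (slice_north x)) (x, S') :=
  to_prod_incl (il x) @ wp_inl x @ ap (pair x) q.

Definition to_prod_merid_inl : paths (to_prod_merid_lhs N) (to_prod_merid_rhs N).
Proof.
  unfold to_prod_merid_lhs, to_prod_merid_rhs.
  rewrite slice_merid_beta_inl, to_prod_south_beta_inl.
  unfold slice_merid_inl, to_prod_south_inl.
  rewrite !ap_pp, !ap_V, <- !(ap_compose incl to_prod), !(ap_homotopic to_prod_incl).
  rewrite wp_glue, <- (ap_compose ir wp), (ap_homotopic wp_inr). path_normalize. reflexivity.
Defined.

Definition to_prod_merid_inr : paths (to_prod_merid_lhs S) (to_prod_merid_rhs S).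
Proof.
  unfold to_prod_merid_lhs, to_prod_merid_rhs.
  rewrite slice_merid_beta_inr, to_prod_south_beta_inr.
  unfold slice_merid_inr, to_prod_south_inr.
  rewrite !ap_pp, !ap_V, <- !(ap_compose incl to_prod), !(ap_homotopic to_prod_incl).
  rewrite to_prod_spoke, null_beta_inr. unfold null_inr. path_normalize. reflexivity.
Defined.

(* After path induction on [jg], [p] and [q], every remaining datum is a free path with a
   free endpoint (or a free filler of a triangle), so the configuration contracts away. *)
Definition to_prod_merid_glue
  : paths (concat_Ap to_prod_merid_lhs p
           @ whiskerR to_prod_merid_inl (ap (fun x => (x, S')) p))
          (whiskerL (ap (fun x => to_prod (slice_north x)) p) to_prod_merid_inr
           @ concat_Ap to_prod_merid_rhs p).
Proof.
  unfold to_prod_merid_inl, to_prod_merid_inr, to_prod_merid_lhs, to_prod_merid_rhs.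
  unfold to_prod_south_glue, to_prod_south_inl, to_prod_south_inr, slice_merid_glue,
    slice_merid_inl, slice_merid_inr, slice_north, spoke_glue, null_glue, null_inl, null_inr
    in *.
  revert W_inl W_inr W_glue wp wp_inl wp_inr wp_glue null null_beta_inl null_beta_inr
    null_beta_glue apex incl spoke to_prod to_prod_apex to_prod_incl to_prod_spoke slice_south
    slice_south_inl slice_south_inr slice_south_glue slice_merid slice_merid_beta_inl
    slice_merid_beta_inr slice_merid_beta_glue to_prod_south to_prod_south_beta_inl
    to_prod_south_beta_inr to_prod_south_beta_glue.
  destruct jg, p, q. cbn.
  intro W_inl. refine (triangle_ind_r W_inl (1 @ gv⁻¹) _ _). cbn beta.
  intros wp wp_inl wp_inr. generalize (wp_inr N') as r. clear wp_inr.
  revert W_inl. generalize dependent gv. generalize (ir N') as v. intros v gv0 W_inl0.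
  destruct gv0.
  refine (triangle_ind_r (wp_inl N) 1 _ _). cbn beta.
  intros null null_beta_inl null_beta_inr null_beta_glue apex incl spoke to_prod
    to_prod_apex to_prod_incl to_prod_spoke.
  generalize (to_prod_spoke ja) as E. clear to_prod_spoke.
  revert null_beta_inl null_beta_inr null_beta_glue apex incl spoke to_prod to_prod_apex
    to_prod_incl.
  generalize (null ja) as t. clear null.
  refine (homotopy_at_glue_ind _ _ _ _ _). cbn beta.
  intros apex incl spoke to_prod to_prod_apex to_prod_incl E.
  revert E. generalize (spoke ja) as u. clear spoke. intro u. destruct_inv u.
  revert to_prod_apex. refine (triangle_ind_l _ _ _ _). cbn beta.
  intros slice_south slice_south_inl. refine (triangle_ind_r _ _ _ _). cbn beta.
  intro slice_merid. generalize (slice_merid N) as c. clear slice_merid.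
  refine (homotopy_at_glue_ind _ _ _ _ _). cbn beta.
  intro to_prod_south. generalize (to_prod_south N) as c. clear to_prod_south.
  refine (homotopy_at_glue_ind _ _ _ _ _). cbn beta.
  revert slice_south_inl. generalize (slice_south N) as z. intros z pin. destruct_inv pin.
  revert W_inl0. generalize (W ja) as w. intros w wi. destruct_inv wi.
  cbn. generalize (to_prod_incl (il N)) as er. clear to_prod_incl.
  generalize (wp_inl N) as wl. clear wp_inl.
  generalize (wp (il N)) as s. intros s wl er. destruct er.
  revert wl. generalize (to_prod (incl (il N))) as y. refine (paths_ind_r _ _).
  reflexivity.
Defined.

Context {grid : SA -> SB -> P} {grid_inl : forall x, paths (grid x N') (slice_north x)}
  {grid_inr : forall x, paths (grid x S') (slice_south x)}
  {grid_glue : forall x, paths (ap (grid x) q) (grid_inl x @ slice_merid x @ (grid_inr x)⁻¹)}.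

Definition grid_uncurried (z : SA * SB) : P := grid (fst z) (snd z).

Definition grid_north_inl : paths (grid N N') (incl (ir N')) := grid_inl N @ ap incl gv.
Definition grid_north_inr : paths (grid N S') (incl (ir S')) := grid_inr N @ slice_south_inl.
Definition grid_north_glue
  : paths (ap (grid N) q @ grid_north_inr) (grid_north_inl @ ap (fun y => incl (ir y)) q).
Proof.
  rewrite grid_glue, slice_merid_beta_inl, (ap_compose ir incl).
  unfold grid_north_inl, grid_north_inr, slice_merid_inl. path_normalize. reflexivity.
Defined.

Context {grid_north : forall y, paths (grid N y) (incl (ir y))}
  {grid_north_beta_inl : paths (grid_north N') grid_north_inl}
  {grid_north_beta_inr : paths (grid_north S') grid_north_inr}
  {grid_north_beta_glue : paths (concat_Ap grid_north q)
     (whiskerL (ap (grid N) q) grid_north_beta_inr @ grid_north_glue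
      @ whiskerR grid_north_beta_inl⁻¹ (ap (fun y => incl (ir y)) q))}.

Definition of_prod_wedge_inl (x : SA) : paths (grid_uncurried (wp (il x))) (incl (il x)) :=
  ap grid_uncurried (wp_inl x) @ grid_inl x.
Definition of_prod_wedge_inr (y : SB) : paths (grid_uncurried (wp (ir y))) (incl (ir y)) :=
  ap grid_uncurried (wp_inr y) @ grid_north y.
Definition of_prod_wedge_glue
  : paths (ap (fun w => grid_uncurried (wp w)) gv @ of_prod_wedge_inr N')
          (of_prod_wedge_inl N @ ap incl gv).
Proof.
  rewrite (ap_compose wp grid_uncurried), wp_glue.
  unfold of_prod_wedge_inr, of_prod_wedge_inl. rewrite grid_north_beta_inl.
  unfold grid_north_inl. rewrite !ap_pp, !ap_V. path_normalize. reflexivity.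
Defined.

Context {of_prod_wedge : forall w, paths (grid_uncurried (wp w)) (incl w)}
  {of_prod_wedge_beta_inl : forall x, paths (of_prod_wedge (il x)) (of_prod_wedge_inl x)}
  {of_prod_wedge_beta_inr : forall y, paths (of_prod_wedge (ir y)) (of_prod_wedge_inr y)}
  {of_prod_wedge_beta_glue : paths (concat_Ap of_prod_wedge gv)
     (whiskerL (ap (fun w => grid_uncurried (wp w)) gv) (of_prod_wedge_beta_inr N')
      @ of_prod_wedge_glue @ whiskerR (of_prod_wedge_beta_inl N)⁻¹ (ap incl gv))}.

Definition of_prod_null_lhs (j : J) : paths (grid_uncurried (S, S')) (incl (W j)) :=
  ap grid_uncurried (null j) @ of_prod_wedge (W j).
Definition of_prod_null_rhs (j : J) : paths (grid_uncurried (S, S')) (incl (W j)) :=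
  grid_inr S @ slice_south_inr @ spoke j.

Definition of_prod_null_inl : paths (of_prod_null_lhs ja) (of_prod_null_rhs ja).
Proof.
  unfold of_prod_null_lhs, of_prod_null_rhs. rewrite null_beta_inl. unfold null_inl.
  rewrite !ap_pp, !ap_V, <- (ap_compose (fun x => (x, S')) grid_uncurried).
  rewrite <- !(ap_compose wp grid_uncurried), (ap_homotopic of_prod_wedge W_inl).
  rewrite of_prod_wedge_beta_inr. unfold of_prod_wedge_inr.
  rewrite grid_north_beta_inr. unfold grid_north_inr.
  change (fun x => grid_uncurried (x, S')) with (fun x => grid x S').
  rewrite (ap_homotopic grid_inr), slice_south_glue. path_normalize. reflexivity.
Defined.

Definition of_prod_null_inr : paths (of_prod_null_lhs jb) (of_prod_null_rhs jb).
Proof.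
  unfold of_prod_null_lhs, of_prod_null_rhs. rewrite null_beta_inr. unfold null_inr.
  rewrite !ap_pp, !ap_V, <- (ap_compose (pair S) grid_uncurried).
  rewrite <- !(ap_compose wp grid_uncurried), (ap_homotopic of_prod_wedge W_inr).
  rewrite of_prod_wedge_beta_inl. unfold of_prod_wedge_inl.
  change (fun y => grid_uncurried (S, y)) with (grid S).
  rewrite grid_glue, slice_merid_beta_inr. unfold slice_merid_inr.
  path_normalize. reflexivity.
Defined.

Lemma of_prod_null_glue
  : paths (concat_Ap of_prod_null_lhs jg
           @ whiskerR of_prod_null_inl (ap (fun j => incl (W j)) jg))
          (whiskerL (ap (fun _ => grid_uncurried (S, S')) jg) of_prod_null_inr
           @ concat_Ap of_prod_null_rhs jg).
Proof.
  clear to_prod_south_beta_glue to_prod_south_beta_inl to_prod_south_beta_inr to_prod_south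
    to_prod_spoke to_prod_incl to_prod_apex to_prod.
  unfold of_prod_null_inl, of_prod_null_inr, of_prod_null_lhs, of_prod_null_rhs,
    of_prod_wedge_glue, of_prod_wedge_inl, of_prod_wedge_inr, grid_north_glue, grid_north_inl,
    grid_north_inr, grid_uncurried, slice_merid_glue, slice_merid_inl, slice_merid_inr,
    slice_north, spoke_glue, null_glue, null_inl, null_inr in *.
  revert W_inl W_inr W_glue wp wp_inl wp_inr wp_glue null null_beta_inl null_beta_inr
    null_beta_glue apex incl spoke slice_south slice_south_inl slice_south_inr slice_south_glue
    slice_merid slice_merid_beta_inl slice_merid_beta_inr slice_merid_beta_glue grid grid_inl
    grid_inr grid_glue grid_north grid_north_beta_inl grid_north_beta_inr grid_north_beta_glue
    of_prod_wedge of_prod_wedge_beta_inl of_prod_wedge_beta_inr of_prod_wedge_beta_glue.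
  destruct jg, p, q. cbn.
  intros W_inl'. refine (triangle_ind_r W_inl' (1 @ gv⁻¹) _ _). cbn beta.
  intros wp' wp_inl' wp_inr' wp_glue' null' null_beta_inl' null_beta_inr' null_beta_glue' apex'
    incl' spoke' slice_south' slice_south_inl' slice_south_inr' slice_south_glue' slice_merid'
    slice_merid_beta_inl' slice_merid_beta_inr' slice_merid_beta_glue' grid' grid_inl' grid_inr'
    grid_glue' grid_north' grid_north_beta_inl' grid_north_beta_inr' grid_north_beta_glue'
    of_prod_wedge' of_prod_wedge_beta_inl' of_prod_wedge_beta_inr' of_prod_wedge_beta_glue'.
  abstract_term (null' ja) t. clear null'.
  abstract_term (spoke' ja) u. clear spoke'.
  abstract_term (grid_glue' N) gg. clear grid_glue'.
  abstract_term (slice_merid' N) c. clear slice_merid'.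
  abstract_term (of_prod_wedge_beta_inl' N) li. clear of_prod_wedge_beta_inl'.
  abstract_term (of_prod_wedge_beta_inr' N') ri. clear of_prod_wedge_beta_inr'.
  abstract_term (wp_inl' N) wl. clear wp_inl'.
  abstract_term (wp_inr' N') wr. clear wp_inr'.
  abstract_term (grid_inl' N) gl. clear grid_inl'.
  abstract_term (grid_inr' N) gr. clear grid_inr'.
  abstract_term (grid_north' N') s. clear grid_north'.
  abstract_term (W ja) w. revert_front2 w W_inl'. refine (paths_ind_r _ _). intros.
  abstract_term (ir N') v. destruct gv. cbn in *.
  revert_front2 wr wp_glue'. refine (triangle_ind_r wl 1 _ _). intros.
  abstract_term (of_prod_wedge' (il N)) l. clear of_prod_wedge'.
  revert_front4 l li ri of_prod_wedge_beta_glue'. refine (homotopy_at_glue_ind _ _ _ _ _). intros.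
  revert_front4 t null_beta_inl' null_beta_inr' null_beta_glue'.
  refine (homotopy_at_glue_ind _ _ _ _ _). intros.
  revert_front2 apex' u. refine (paths_ind_r _ _). intros.
  revert_front2 slice_south_inr' slice_south_glue'. refine (triangle_ind_r _ _ _ _). intros.
  revert_front4 c slice_merid_beta_inl' slice_merid_beta_inr' slice_merid_beta_glue'.
  refine (homotopy_at_glue_ind _ _ _ _ _). intros.
  revert_front2 gr gg. refine (triangle_ind_r _ _ _ _). intros.
  revert_front4 s grid_north_beta_inl' grid_north_beta_inr' grid_north_beta_glue'.
  refine (homotopy_at_glue_ind _ _ _ _ _). intros.
  abstract_term (wp' (il N)) y0. revert_front2 y0 wl. refine (paths_ind_r _ _). intros. cbn.
  abstract_term (slice_south' N) z0. revert_front2 z0 slice_south_inl'. refine (paths_ind_r _ _).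
  intros.
  abstract_term (grid' N N') g0. revert_front2 g0 gl. refine (paths_ind_r _ _).
  reflexivity.
Qed.

End GluePoint.

Section Construction.
Context {A B : Type} (SA : Susp A) (SB : Susp B)
  (V : Wedge SA (north SA) SB (north SB)) (J : Join A B).

Local Notation wl := (po_inl V).
Local Notation wr := (po_inr V).
Local Notation wg := (po_glue V tt).

Definition whitehead : J -> V :=
  po_rec J V (fun _ => wr (south SB)) (fun _ => wl (south SA))
    (fun c => (ap wr (merid SB (snd c)))⁻¹ @ wg⁻¹ @ ap wl (merid SA (fst c))).
Definition whitehead_beta_inl a : paths (whitehead (po_inl J a)) (wr (south SB)) :=
  po_rec_inl J _ _ _ _ a.
Definition whitehead_beta_inr b : paths (whitehead (po_inr J b)) (wl (south SA)) :=
  po_rec_inr J _ _ _ _ b.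
Definition whitehead_beta_glue c
  : paths (ap whitehead (po_glue J c))
      (whitehead_beta_inl (fst c)
       @ ((ap wr (merid SB (snd c)))⁻¹ @ wg⁻¹ @ ap wl (merid SA (fst c)))
       @ (whitehead_beta_inr (snd c))⁻¹) :=
  po_rec_glue J V _ _ _ c.

(* [wedge_to_prod V] is [po_rec] with glue data [fun _ => 1], since [p @ 1] reduces to [p]. *)
Definition wedge_to_prod_beta_inl x : paths (wedge_to_prod V (wl x)) (x, north SB) :=
  po_rec_inl V (SA * SB) (fun x => (x, north SB)) (fun y => (north SA, y)) (fun _ => 1) x.
Definition wedge_to_prod_beta_inr y : paths (wedge_to_prod V (wr y)) (north SA, y) :=
  po_rec_inr V (SA * SB) (fun x => (x, north SB)) (fun y => (north SA, y)) (fun _ => 1) y.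
Definition wedge_to_prod_beta_glue
  : paths (ap (wedge_to_prod V) wg)
      (wedge_to_prod_beta_inl (north SA) @ 1 @ (wedge_to_prod_beta_inr (north SB))⁻¹) :=
  po_rec_glue V (SA * SB) (fun x => (x, north SB)) (fun y => (north SA, y)) (fun _ => 1) tt.

Definition null : forall j, paths (south SA, south SB) (wedge_to_prod V (whitehead j)) :=
  po_homotopy J _ _
    (fun a => null_inl (p := merid SA a) (W_inl := whitehead_beta_inl a)
                (wp_inr := wedge_to_prod_beta_inr))
    (fun b => null_inr (q := merid SB b) (W_inr := whitehead_beta_inr b)
                (wp_inl := wedge_to_prod_beta_inl))
    (fun c => null_glue (W_glue := whitehead_beta_glue c) (wp_glue := wedge_to_prod_beta_glue)).
Definition null_beta_inl a : paths (null (po_inl J a)) _ := po_homotopy_inl J _ _ _ _ _ a.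
Definition null_beta_inr b : paths (null (po_inr J b)) _ := po_homotopy_inr J _ _ _ _ _ b.
Definition null_beta_glue c : paths (concat_Ap null (po_glue J c)) _ :=
  po_homotopy_glue J _ _ _ _ _ c.

Context (P : Pushout (fun _ : J => tt) whitehead).

Local Notation apex := (po_inl P tt).
Local Notation incl := (po_inr P).
Local Notation spoke := (po_glue P).

Definition to_prod : P -> SA * SB :=
  po_rec P (SA * SB) (fun _ => (south SA, south SB)) (wedge_to_prod V) null.
Definition to_prod_beta_apex : paths (to_prod apex) (south SA, south SB) :=
  po_rec_inl P _ _ _ _ tt.
Definition to_prod_beta_incl w : paths (to_prod (incl w)) (wedge_to_prod V w) :=
  po_rec_inr P _ _ _ _ w.
Definition to_prod_beta_spoke j
  : paths (ap to_prod (spoke j))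
      (to_prod_beta_apex @ null j @ (to_prod_beta_incl (whitehead j))⁻¹) :=
  po_rec_glue P _ _ _ _ j.

Definition slice_south : SA -> P :=
  po_rec SA P (fun _ => incl (wr (south SB))) (fun _ => apex)
    (fun a => (ap incl (whitehead_beta_inl a))⁻¹ @ (spoke (po_inl J a))⁻¹).
Definition slice_south_beta_inl : paths (slice_south (north SA)) (incl (wr (south SB))) :=
  po_rec_inl SA P _ _ _ tt.
Definition slice_south_beta_inr : paths (slice_south (south SA)) apex :=
  po_rec_inr SA P _ _ _ tt.
Definition slice_south_beta_glue a
  : paths (ap slice_south (merid SA a))
      (slice_south_beta_inl
       @ ((ap incl (whitehead_beta_inl a))⁻¹ @ (spoke (po_inl J a))⁻¹)
       @ slice_south_beta_inr⁻¹) :=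
  po_rec_glue SA P _ _ _ a.

Local Notation slice_north := (slice_north (il := wl) (incl := incl)).

Definition slice_merid (b : B) : forall x, paths (slice_north x) (slice_south x) :=
  po_homotopy SA _ _
    (unit_rect _ (slice_merid_inl (q := merid SB b) (gv := wg)
                    (slice_south_inl := slice_south_beta_inl)))
    (unit_rect _ (slice_merid_inr (W_inr := whitehead_beta_inr b) (spoke := spoke)
                    (slice_south_inr := slice_south_beta_inr)))
    (fun a => slice_merid_glue (W_glue := whitehead_beta_glue (a, b))
                (slice_south_glue := slice_south_beta_glue a)).
Definition slice_merid_beta_inl b : paths (slice_merid b (north SA)) _ :=
  po_homotopy_inl SA _ _ _ _ _ tt.
Definition slice_merid_beta_inr b : paths (slice_merid b (south SA)) _ :=
  po_homotopy_inr SA _ _ _ _ _ tt.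
Definition slice_merid_beta_glue b a : paths (concat_Ap (slice_merid b) (merid SA a)) _ :=
  po_homotopy_glue SA _ _ _ _ _ a.

Definition to_prod_south : forall x, paths (to_prod (slice_south x)) (x, south SB) :=
  po_homotopy SA _ _
    (unit_rect _ (to_prod_south_inl (slice_south_inl := slice_south_beta_inl)
                    (to_prod_incl := to_prod_beta_incl) (wp_inr := wedge_to_prod_beta_inr)))
    (unit_rect _ (to_prod_south_inr (slice_south_inr := slice_south_beta_inr)
                    (to_prod_apex := to_prod_beta_apex)))
    (fun a => to_prod_south_glue (slice_south_glue := slice_south_beta_glue a)
                (to_prod_spoke := to_prod_beta_spoke) (null_beta_inl := null_beta_inl a)).
Definition to_prod_south_beta_inl : paths (to_prod_south (north SA)) _ :=
  po_homotopy_inl SA _ _ _ _ _ tt.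
Definition to_prod_south_beta_inr : paths (to_prod_south (south SA)) _ :=
  po_homotopy_inr SA _ _ _ _ _ tt.
Definition to_prod_south_beta_glue a : paths (concat_Ap to_prod_south (merid SA a)) _ :=
  po_homotopy_glue SA _ _ _ _ _ a.

Definition to_prod_merid (b : B) :=
  po_homotopy2 SA _ _
    (to_prod_merid_lhs (slice_merid := slice_merid b) (to_prod_south := to_prod_south))
    (to_prod_merid_rhs (to_prod_incl := to_prod_beta_incl) (wp_inl := wedge_to_prod_beta_inl)
       (q := merid SB b))
    (unit_rect _ (to_prod_merid_inl (wp_glue := wedge_to_prod_beta_glue)
                    (slice_merid_beta_inl := slice_merid_beta_inl b)
                    (to_prod_south_beta_inl := to_prod_south_beta_inl)))
    (unit_rect _ (to_prod_merid_inr (to_prod_spoke := to_prod_beta_spoke)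
                    (null_beta_inr := null_beta_inr b)
                    (slice_merid_beta_inr := slice_merid_beta_inr b)
                    (to_prod_south_beta_inr := to_prod_south_beta_inr)))
    (fun a => to_prod_merid_glue (W_glue := whitehead_beta_glue (a, b))
                (wp_glue := wedge_to_prod_beta_glue) (null_beta_glue := null_beta_glue (a, b))
                (to_prod_spoke := to_prod_beta_spoke) (slice_south_glue := slice_south_beta_glue a)
                (slice_merid_beta_glue := slice_merid_beta_glue b a)
                (to_prod_south_beta_glue := to_prod_south_beta_glue a)).

Definition grid (x : SA) : SB -> P :=
  po_rec SB P (fun _ => slice_north x) (fun _ => slice_south x) (fun b => slice_merid b x).
Definition grid_beta_inl x : paths (grid x (north SB)) (slice_north x) :=
  po_rec_inl SB P _ _ _ tt.
Definition grid_beta_inr x : paths (grid x (south SB)) (slice_south x) :=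
  po_rec_inr SB P _ _ _ tt.
Definition grid_beta_glue x b
  : paths (ap (grid x) (merid SB b))
      (grid_beta_inl x @ slice_merid b x @ (grid_beta_inr x)⁻¹) :=
  po_rec_glue SB P _ _ _ b.

Definition of_prod : SA * SB -> P := grid_uncurried (grid := grid).

Definition to_prod_grid_inl x : paths (to_prod (grid x (north SB))) (x, north SB) :=
  ap to_prod (grid_beta_inl x) @ to_prod_beta_incl (wl x) @ wedge_to_prod_beta_inl x.
Definition to_prod_grid_inr x : paths (to_prod (grid x (south SB))) (x, south SB) :=
  ap to_prod (grid_beta_inr x) @ to_prod_south x.

Lemma to_prod_grid_glue x b
  : paths (ap (fun y => to_prod (grid x y)) (merid SB b) @ to_prod_grid_inr x)
          (to_prod_grid_inl x @ ap (pair x) (merid SB b)).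
Proof.
  pose proof (to_prod_merid b x) as H. unfold to_prod_merid_lhs, to_prod_merid_rhs in H.
  rewrite (ap_compose (grid x) to_prod), grid_beta_glue.
  unfold to_prod_grid_inr, to_prod_grid_inl.
  rewrite !ap_pp, !ap_V. path_normalize. rewrite <- !concat_p_pp, H. path_normalize.
  reflexivity.
Qed.

Definition to_prod_grid (x : SA) : forall y, paths (to_prod (grid x y)) (x, y) :=
  po_homotopy SB _ _ (unit_rect _ (to_prod_grid_inl x)) (unit_rect _ (to_prod_grid_inr x))
    (to_prod_grid_glue x).

Definition of_prodK (z : SA * SB) : paths (to_prod (of_prod z)) z :=
  match z with (x, y) => to_prod_grid x y end.

Definition grid_north : forall y, paths (grid (north SA) y) (incl (wr y)) :=
  po_homotopy SB _ _
    (unit_rect _ (grid_north_inl (grid_inl := grid_beta_inl) (gv := wg)))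
    (unit_rect _ (grid_north_inr (grid_inr := grid_beta_inr)
                    (slice_south_inl := slice_south_beta_inl)))
    (fun b => grid_north_glue (grid_glue := fun x => grid_beta_glue x b)
                (slice_merid_beta_inl := slice_merid_beta_inl b)).
Definition grid_north_beta_inl : paths (grid_north (north SB)) _ :=
  po_homotopy_inl SB _ _ _ _ _ tt.
Definition grid_north_beta_inr : paths (grid_north (south SB)) _ :=
  po_homotopy_inr SB _ _ _ _ _ tt.
Definition grid_north_beta_glue b : paths (concat_Ap grid_north (merid SB b)) _ :=
  po_homotopy_glue SB _ _ _ _ _ b.

Definition of_prod_wedge : forall w, paths (of_prod (wedge_to_prod V w)) (incl w) :=
  po_homotopy V _ _
    (of_prod_wedge_inl (wp_inl := wedge_to_prod_beta_inl) (grid_inl := grid_beta_inl))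
    (of_prod_wedge_inr (wp_inr := wedge_to_prod_beta_inr) (grid_north := grid_north))
    (unit_rect _ (of_prod_wedge_glue (wp_glue := wedge_to_prod_beta_glue)
                    (grid_north_beta_inl := grid_north_beta_inl))).
Definition of_prod_wedge_beta_inl x : paths (of_prod_wedge (wl x)) _ :=
  po_homotopy_inl V _ _ _ _ _ x.
Definition of_prod_wedge_beta_inr y : paths (of_prod_wedge (wr y)) _ :=
  po_homotopy_inr V _ _ _ _ _ y.
Definition of_prod_wedge_beta_glue : paths (concat_Ap of_prod_wedge wg) _ :=
  po_homotopy_glue V _ _ _ _ _ tt.

Definition of_prod_null :=
  po_homotopy2 J _ _
    (of_prod_null_lhs (null := null) (of_prod_wedge := of_prod_wedge))
    (of_prod_null_rhs (grid_inr := grid_beta_inr) (slice_south_inr := slice_south_beta_inr)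
       (spoke := spoke))
    (fun a => of_prod_null_inl (null_beta_inl := null_beta_inl a)
                (of_prod_wedge_beta_inr := of_prod_wedge_beta_inr)
                (grid_north_beta_inr := grid_north_beta_inr)
                (slice_south_glue := slice_south_beta_glue a))
    (fun b => of_prod_null_inr (null_beta_inr := null_beta_inr b)
                (of_prod_wedge_beta_inl := of_prod_wedge_beta_inl)
                (grid_glue := fun x => grid_beta_glue x b)
                (slice_merid_beta_inr := slice_merid_beta_inr b))
    (fun '(a, b) => of_prod_null_glue (W_glue := whitehead_beta_glue (a, b))
                (wp_glue := wedge_to_prod_beta_glue) (null_beta_glue := null_beta_glue (a, b))
                (slice_south_glue := slice_south_beta_glue a)
                (slice_merid_beta_glue := slice_merid_beta_glue b a)
                (grid_glue := fun x => grid_beta_glue x b)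
                (grid_north_beta_glue := grid_north_beta_glue b)
                (of_prod_wedge_beta_glue := of_prod_wedge_beta_glue)).

Definition of_to_prod_apex : paths (of_prod (to_prod apex)) apex :=
  ap of_prod to_prod_beta_apex @ grid_beta_inr (south SA) @ slice_south_beta_inr.
Definition of_to_prod_incl w : paths (of_prod (to_prod (incl w))) (incl w) :=
  ap of_prod (to_prod_beta_incl w) @ of_prod_wedge w.

Lemma of_to_prod_spoke j
  : paths (ap (fun p => of_prod (to_prod p)) (spoke j) @ of_to_prod_incl (whitehead j))
          (of_to_prod_apex @ ap (fun p => p) (spoke j)).
Proof.
  pose proof (of_prod_null j) as H. unfold of_prod_null_lhs, of_prod_null_rhs in H.
  unfold of_to_prod_incl, of_to_prod_apex, of_prod.
  rewrite (ap_compose to_prod grid_uncurried), to_prod_beta_spoke, ap_idmap.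
  rewrite !ap_pp, !ap_V. path_normalize. rewrite <- !concat_p_pp, H. path_normalize.
  reflexivity.
Qed.

Definition to_prodK : forall p, paths (of_prod (to_prod p)) p :=
  po_homotopy P _ _ (unit_rect _ of_to_prod_apex) of_to_prod_incl of_to_prod_spoke.

End Construction.

Theorem proposition8 (funext : Funext) (A B : Type) (SA : Susp A) (SB : Susp B)
  (V : Wedge SA (north SA) SB (north SB)) (J : Join A B) :
  { W : J -> V &
    forall P : Pushout (fun _ : J => tt) W,
      { e : P -> (SA * SB)%type &
        (IsEquiv e
         * (forall w : V, paths (e (po_inr P w)) (wedge_to_prod V w)))%type } }.
Proof.
  exists (whitehead SA SB V J). intro P.
  exists (to_prod SA SB V J P). split.
  - exact (isequiv_of_inverse _ (of_prod SA SB V J P) (to_prodK SA SB V J P)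
             (of_prodK SA SB V J P)).
  - exact (to_prod_beta_incl SA SB V J P).
Qed.
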